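(* Let $n\ge 2$ be an integer and $A\subseteq L_n$. The subspace $(L_n,\tau(A)|_{L_n})$ of $(X_n,\tau(A))$ is Lindelöf if and only if $L_n\setminus A$ does not contain a closed uncountable subset of $(L_n,\tau_E|_{L_n})$.
   Context: For $\overline{x},\overline{a}\in\mathbb R^n$ let $|\overline{x}-\overline{a}|$ be the Euclidean distance and $B(\overline{a},\epsilon)=\{\overline{x}\in\mathbb R^n:|\overline{x}-\overline{a}|<\epsilon\}$. Let $P_n=\{\overline{x}\in\mathbb R^n: x_n>0\}$, $L_n=\{\overline{x}\in\mathbb R^n: x_n=0\}$, $X_n=P_n\cup L_n$, and let $\tau_E$ denote the Euclidean topology on $X_n$. For $\overline{a}\in L_n$ and $\epsilon>0$ put $\overline{a(\epsilon)}=(a_1,\dots,a_{n-1},\epsilon)$ and $\tilde B(\overline{a},\epsilon)=\{\overline{a}\}\cup B(\overline{a(\epsilon)},\epsilon)$. For $A\subseteq L_n$, the topology $\tau(A)$ on $X_n$ is generated by the local bases: at $\overline{a}\in P_n$, the sets $B(\overline{a},\epsilon)$ with $0<\epsilon<a_n$; at $\overline{a}\in A$, the sets $B(\overline{a},\epsilon)\cap X_n$ with $\epsilon>0$; at $\overline{a}\in L_n\setminus A$, the sets $\tilde B(\overline{a},\epsilon)$ with $\epsilon>0$. *)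

From mathcomp Require Import all_boot all_order all_algebra.
From mathcomp Require Import boolp classical_sets cardinality reals.
Set Implicit Arguments. Unset Strict Implicit. Unset Printing Implicit Defensive.
Import Order.TTheory GRing.Theory Num.Theory.
Local Open Scope ring_scope.
Local Open Scope classical_set_scope.

Section Defs.
Variable R : realType.
Variable n : nat.

Definition pt := 'I_n -> R.

Definition edist (x a : pt) : R := Num.sqrt (\sum_(i < n) (x i - a i) ^+ 2).

Definition eball (a : pt) (eps : R) : set pt := [set x | edist x a < eps].

(* the n-th (last) coordinate x_n, i.e. index n-1 (meaningful for n >= 1) *)
Definition lastc (x : pt) : R :=
  match insub n.-1 with Some i => x i | None => 0 end.

Definition Pn : set pt := [set x | 0 < lastc x].
Definition Ln : set pt := [set x | lastc x = 0].
Definition Xn : set pt := Pn `|` Ln.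

Definition shift_pt (a : pt) (eps : R) : pt :=
  fun i => if val i == n.-1 then eps else a i.

Definition tball (a : pt) (eps : R) : set pt :=
  [set a] `|` eball (shift_pt a eps) eps.

Definition basic_nbhd (A : set pt) (a : pt) (N : set pt) : Prop :=
  (Pn a /\ exists eps, 0 < eps /\ eps < lastc a /\ N = eball a eps) \/
  (A a /\ exists eps, 0 < eps /\ N = eball a eps `&` Xn) \/
  (Ln a /\ ~ A a /\ exists eps, 0 < eps /\ N = tball a eps).

Definition tauA_open (A : set pt) (U : set pt) : Prop :=
  U `<=` Xn /\ forall a, U a -> exists N, basic_nbhd A a N /\ N `<=` U.

Definition tauA_Ln_open (A : set pt) (V : set pt) : Prop :=
  exists U, tauA_open A U /\ V = U `&` Ln.

Definition Ln_tauA_Lindelof (A : set pt) : Prop :=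
  forall F : set (set pt),
    (forall V, F V -> tauA_Ln_open A V) ->
    Ln `<=` \bigcup_(V in F) V ->
    exists G : set (set pt), [/\ G `<=` F, countable G & Ln `<=` \bigcup_(V in G) V].

Definition Ln_euclid_closed (C : set pt) : Prop :=
  C `<=` Ln /\
  forall x, Ln x -> ~ C x -> exists eps, 0 < eps /\ eball x eps `&` Ln `<=` ~` C.

End Defs.

From mathcomp Require Import all_boot all_order all_algebra.
From mathcomp Require Import boolp classical_sets cardinality reals.
From mathcomp Require Import ring lra.
Set Implicit Arguments. Unset Strict Implicit. Unset Printing Implicit Defensive.
Import Order.TTheory GRing.Theory Num.Theory.
Local Open Scope ring_scope.
Local Open Scope classical_set_scope.

(* Each point of L_n \ A has a basic neighbourhood meeting L_n only in itself,
   while at points of A the topology is Euclidean.  Hence a Euclidean-closed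
   C inside L_n \ A is closed and discrete in (L_n, tau(A)), so it is countable
   when that space is Lindelof.  Conversely, given an open cover, the points
   not lying in any rational ball whose trace on L_n refines the cover form a
   Euclidean-closed subset of L_n \ A; if it is countable, one member of the
   cover for each of its points and one for each refining rational ball give
   a countable subcover. *)

Section Euclid.
Variables (R : realType) (n : nat).
Implicit Types (u v : 'I_n -> R) (x y z a : pt R n).

Lemma sumsq_ge0 u : 0 <= \sum_i u i ^+ 2.
Proof. by apply: sumr_ge0 => i _; exact: sqr_ge0. Qed.

Lemma sumsq_eq0_sum_mul u v : \sum_i u i ^+ 2 = 0 -> \sum_i u i * v i = 0.
Proof.
move=> /psumr_eq0P u0; rewrite big1 // => i _.
by have /eqP := u0 (fun j _ => sqr_ge0 (u j)) i isT; rewrite sqrf_eq0 => /eqP->; rewrite mul0r.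
Qed.

Lemma sum_mul_le_sqrt_sumsq u v :
  \sum_i u i * v i <= Num.sqrt (\sum_i u i ^+ 2) * Num.sqrt (\sum_i v i ^+ 2).
Proof.
set A := Num.sqrt _; set B := Num.sqrt _; set S := \sum_i _.
have A2 : A ^+ 2 = \sum_i u i ^+ 2 by rewrite sqr_sqrtr // sumsq_ge0.
have B2 : B ^+ 2 = \sum_i v i ^+ 2 by rewrite sqr_sqrtr // sumsq_ge0.
have [A0|A0] := eqVneq A 0.
  by rewrite A0 mul0r /S sumsq_eq0_sum_mul // -A2 A0 expr0n.
have [B0|B0] := eqVneq B 0.
  rewrite B0 mulr0 /S (eq_bigr (fun i => v i * u i)) => [|i _]; last exact: mulrC.
  by rewrite sumsq_eq0_sum_mul // -B2 B0 expr0n.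
have ABp : 0 < A * B by rewrite mulr_gt0 // lt_def ?A0 ?B0 sqrtr_ge0.
(* Lagrange: 0 <= sum_i (B u_i - A v_i)^2 = 2 A B (A B - S). *)
have : 0 <= \sum_i (B * u i - A * v i) ^+ 2 by exact: sumsq_ge0.
rewrite (eq_bigr (fun i => B ^+ 2 * u i ^+ 2 - 2 * A * B * (u i * v i)
                           + A ^+ 2 * v i ^+ 2)) => [|i _]; last by ring.
rewrite big_split sumrB /= -!mulr_sumr -/S -A2 -B2; nra.
Qed.

Lemma edist_sym x y : edist x y = edist y x.
Proof. by rewrite /edist; congr Num.sqrt; apply: eq_bigr => i _; ring. Qed.

Lemma edist_triangle x y z : edist x z <= edist x y + edist y z.
Proof.
rewrite /edist; set u := fun i => x i - y i; set v := fun i => y i - z i.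
rewrite -/(\sum_i u i ^+ 2) -/(\sum_i v i ^+ 2).
set A := Num.sqrt (\sum_i u i ^+ 2); set B := Num.sqrt (\sum_i v i ^+ 2).
have AB0 : 0 <= A + B by rewrite addr_ge0 ?sqrtr_ge0.
rewrite -(ger0_norm AB0) -sqrtr_sqr ler_sqrt ?sqr_ge0 //.
have -> : \sum_i (x i - z i) ^+ 2 =
          \sum_i u i ^+ 2 + 2 * (\sum_i u i * v i) + \sum_i v i ^+ 2.
  by rewrite mulr_sumr -!big_split; apply: eq_bigr => i _ /=; rewrite /u /v; ring.
have := sum_mul_le_sqrt_sumsq u v.
rewrite -/A -/B -(sqr_sqrtr (sumsq_ge0 u)) -(sqr_sqrtr (sumsq_ge0 v)) -/A -/B.
nra.
Qed.

Lemma ler_norm_sub_edist x y (k : 'I_n) : `|x k - y k| <= edist x y.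
Proof.
rewrite /edist -sqrtr_sqr ler_sqrt ?sumsq_ge0 // (bigD1 k) //= lerDl.
by apply: sumr_ge0 => i _; exact: sqr_ge0.
Qed.

Lemma eball_open a s r : edist a s < r ->
  exists eps, 0 < eps /\ eball a eps `<=` eball s r.
Proof.
move=> h; exists (r - edist a s); split; first by rewrite subr_gt0.
by move=> y; rewrite /eball /= => hy; have := edist_triangle y a s; lra.
Qed.

Definition qball (p : {ffun 'I_n -> rat} * rat) : set (pt R n) :=
  eball (fun i => ratr (p.1 i)) (ratr p.2).

Lemma qball_between a eps : 0 < eps ->
  exists p, qball p a /\ qball p `<=` eball a eps.
Proof.
move=> eps0.
have [r] : exists r : rat, ratr r \in `](0 : R), eps / 2[%R by apply: rat_in_itvoo; lra.
rewrite in_itv /= => /andP[r0 r2].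
set d := (ratr r : R) / n.+1%:R.
have d0 : 0 < d by rewrite divr_gt0 ?ltr0n.
have rd : (ratr r : R) = n.+1%:R * d by rewrite mulrC divfK // pnatr_eq0.
have /choice[q qd] : forall i, exists q : rat, ratr q \in `](a i - d), (a i + d)[%R.
  by move=> i; apply: rat_in_itvoo; lra.
set c : pt R n := fun i => ratr (finfun q i).
have ac : edist a c < ratr r.
  have r0' : 0 <= (ratr r : R) by lra.
  rewrite /edist -(ger0_norm r0') -sqrtr_sqr ltr_sqrt ?exprn_gt0 //.
  apply: (@le_lt_trans _ _ (\sum_(i < n) d ^+ 2)).
    apply: ler_sum => i _; rewrite /c ffunE.
    by move: (qd i); rewrite in_itv /= => /andP[h1 h2]; nra.
  rewrite sumr_const card_ord -mulr_natr rd -natr1.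
  have n0 : (0 : R) <= n%:R by rewrite ler0n.
  nra.
exists (finfun q, r); split=> // y; rewrite /qball /eball /= -/c => yc.
by have := edist_triangle y c a; rewrite (edist_sym c a); lra.
Qed.

End Euclid.

Lemma countable_setU T (X Y : set T) : countable X -> countable Y -> countable (X `|` Y).
Proof.
move=> cX cY; have -> : X `|` Y = \bigcup_(b in [set: bool]) (if b then X else Y).
  apply/seteqP; split=> x; first by case=> h; [exists true | exists false].
  by case=> -[] _ h; [left | right].
by apply: bigcup_countable => // -[].
Qed.

Section CountableSubcover.
Variable T : Type.
Implicit Types (S C : set T) (F G : set (set T)).

Definition lindelof_in (op : set T -> Prop) S : Prop :=
  forall F, (forall V, F V -> op V) -> S `<=` \bigcup_(V in F) V ->
  exists G, [/\ G `<=` F, countable G & S `<=` \bigcup_(V in G) V].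

Lemma lindelof_closed_discrete_countable op S C : lindelof_in op S ->
  C `<=` S -> op (S `\` C) -> (forall c, C c -> op [set c]) -> countable C.
Proof.
move=> SL CS SCo c1o.
pose F := [set S `\` C] `|` [set V | exists2 c, C c & V = [set c]].
have [V|x Sx|G [GF Gc SG]] := SL F.
- by case=> [->|[c Cc ->]]; [exact: SCo | exact: c1o].
- have [Cx|nCx] := pselect (C x); last by exists (S `\` C) => //; left.
  by exists [set x] => //; right; exists x.
- apply: (sub_countable (subset_card_le (B := \bigcup_(V in G) (V `&` C)) _)).
    by move=> x Cx; have [V GV Vx] := SG x (CS x Cx); exists V.
  apply: bigcup_countable => // V /GF [->|[c _ ->]].
    by rewrite (_ : _ `&` _ = set0) //; apply/seteqP; split=> x // -[[]].
  exact: sub_countable (subset_card_le (@subIsetl _ _ _)) (countable1 c).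
Qed.

Variables (I : countType) (b : I -> set T).

Definition subordinate S F i : Prop := exists2 V, F V & b i `&` S `<=` V.

Definition residual S F : set T :=
  [set x | S x /\ forall i, subordinate S F i -> ~ b i x].

Lemma not_residual S F x : S x -> ~ residual S F x ->
  exists i, subordinate S F i /\ b i x.
Proof.
move=> Sx nRx; apply: contrapT => nex; apply: nRx; split=> // i si bx.
by apply: nex; exists i.
Qed.

Lemma countable_subcover_of_residual S F : S `<=` \bigcup_(V in F) V ->
  countable (residual S F) ->
  exists G, [/\ G `<=` F, countable G & S `<=` \bigcup_(V in G) V].
Proof.
move=> SF Rc.
have /choice[f fP] : forall i, exists V,
    subordinate S F i -> F V /\ b i `&` S `<=` V.
  move=> i; have [[V FV bV]|nsi] := pselect (subordinate S F i).
    by exists V.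
  by exists set0.
have /choice[g gP] : forall x, exists V, S x -> F V /\ V x.
  move=> x; have [Sx|nSx] := pselect (S x); last by exists set0.
  by have [V FV Vx] := SF x Sx; exists V.
exists (f @` subordinate S F `|` g @` residual S F); split.
- by move=> V [[i si <-]|[x [Sx _] <-]]; [exact: (fP i si).1 | exact: (gP x Sx).1].
- apply: countable_setU; last exact: sub_countable (card_image_le _ _) Rc.
  exact: sub_countable (card_image_le _ _) (countableP _).
- move=> x Sx; have [Rx|nRx] := pselect (residual S F x).
    by exists (g x); [right; exists x | exact: (gP x Sx).2].
  have [i [si bx]] := not_residual Sx nRx.
  by exists (f i); [left; exists i | exact: (fP i si).2].
Qed.

End CountableSubcover.

Section HalfSpace.
Variables (R : realType) (n : nat).
Hypothesis n_ge2 : (2 <= n)%N.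
Local Notation Pn := (@Pn R n).
Local Notation Ln := (@Ln R n).
Local Notation Xn := (@Xn R n).
Implicit Types (A C U : set (pt R n)) (x y a c : pt R n).

Lemma last_ord_lt : (n.-1 < n)%N.
Proof. by rewrite ltn_predL (leq_trans _ n_ge2). Qed.
Let k : 'I_n := Ordinal last_ord_lt.

Lemma lastcE x : lastc x = x k.
Proof.
rewrite /lastc; case: insubP => [i _ ik|]; last by rewrite last_ord_lt.
by congr x; apply: val_inj; rewrite ik.
Qed.

Lemma Ln_not_Pn x : Ln x -> ~ Pn x.
Proof. by rewrite /Ln /Pn /= => ->; rewrite ltxx. Qed.

Lemma eball_Pn a eps : eps <= lastc a -> eball a eps `<=` Pn.
Proof.
rewrite lastcE => epsa y; rewrite /eball /Pn /= lastcE edist_sym => ay.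
by have := ler_norm_sub_edist a y k; have := ler_norm (a k - y k); lra.
Qed.

Lemma shift_eball_Pn c e : eball (shift_pt c e) e `<=` Pn.
Proof. by apply: eball_Pn; rewrite lastcE /shift_pt eqxx. Qed.

Lemma Pn_eball_sub a s r : Pn a -> edist a s < r ->
  exists eps, [/\ 0 < eps, eps < lastc a & eball a eps `<=` eball s r].
Proof.
rewrite /Pn /= => a0 /eball_open[e [e0 es]].
exists (Num.min e (lastc a / 2)); split; [by rewrite lt_min e0; lra | |].
  by rewrite gt_min; apply/orP; right; lra.
by move=> y; rewrite /eball /= lt_min => /andP[ye _]; exact: es.
Qed.

Lemma tball_Ln c e : Ln c -> tball c e `&` Ln = [set c].
Proof.
move=> Lc; apply/seteqP; split=> x; last by move=> ->; split; [left|].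
by case=> -[//|/shift_eball_Pn Px] /Ln_not_Pn.
Qed.

Lemma tauA_open_tball A c e : 0 < e -> Ln c -> ~ A c -> tauA_open A (tball c e).
Proof.
move=> e0 Lc nAc; split=> [x [->|/shift_eball_Pn Px]|a [->|ha]]; [by right|by left| |].
  by exists (tball c e); split=> //; right; right; do 2!split=> //; exists e.
have [eps [eps0 epsa sub]] := Pn_eball_sub (shift_eball_Pn ha) ha.
exists (eball a eps); split; first by left; split; [exact: shift_eball_Pn ha | exists eps].
by move=> y /sub ?; right.
Qed.

Lemma tauA_Ln_open_set1 A c : Ln c -> ~ A c -> tauA_Ln_open A [set c].
Proof.
by move=> Lc nAc; exists (tball c 1); rewrite tball_Ln //; split; first exact: tauA_open_tball.
Qed.

Lemma tauA_open_Pn_setD A C : Ln_euclid_closed C -> C `<=` ~` A ->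
  tauA_open A (Pn `|` (Ln `\` C)).
Proof.
move=> [_ Ccl] CA; split=> [x [Px|[Lx _]]|a [Pa|[La nCa]]]; [by left|by right| |].
  have a0 : 0 < lastc a / 2 by rewrite /Pn /= in Pa; lra.
  exists (eball a (lastc a / 2)); split.
    by left; split=> //; exists (lastc a / 2); do 2!split=> //; lra.
  by move=> y /eball_Pn Py; left; apply: Py; lra.
have [Aa|nAa] := pselect (A a).
  have [eps [eps0 sub]] := Ccl a La nCa.
  exists (eball a eps `&` Xn); split; first by right; left; split=> //; exists eps.
  by move=> y [ay [Py|Ly]]; [left | right; split=> //; exact: sub].
exists (tball a 1); split; first by right; right; do 2!split=> //; exists 1.
by move=> y [->|/shift_eball_Pn]; [right | left].
Qed.

Lemma tauA_Ln_open_setD A C : Ln_euclid_closed C -> C `<=` ~` A ->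
  tauA_Ln_open A (Ln `\` C).
Proof.
move=> Ccl CA; exists (Pn `|` (Ln `\` C)); split; first exact: tauA_open_Pn_setD.
apply/seteqP; split=> x; first by case=> Lx nCx; split; [right|].
by case=> -[Px|//] Lx; case: (Ln_not_Pn Lx Px).
Qed.

Lemma tauA_open_at_A A U a : Ln a -> A a -> tauA_open A U -> U a ->
  exists eps, 0 < eps /\ eball a eps `&` Xn `<=` U.
Proof.
move=> La Aa [_ Uo] /Uo[N [[[/(Ln_not_Pn La)]|[[_ [eps [eps0 ->]]]|[_ []]]] NU]] //.
by exists eps.
Qed.

Lemma residual_qball_closed F : Ln_euclid_closed (residual (@qball R n) Ln F).
Proof.
split=> [x []//|x Lx nRx].
have [p [sp px]] := not_residual Lx nRx.
have [eps [eps0 sub]] := eball_open px.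
by exists eps; split=> // y [/sub py _] [_ /(_ p sp)].
Qed.

Lemma residual_qball_sub A F :
  (forall V, F V -> tauA_Ln_open A V) -> Ln `<=` \bigcup_(V in F) V ->
  residual (@qball R n) Ln F `<=` Ln `\` A.
Proof.
move=> Fo LF x [Lx nsub]; split=> // Ax.
have [V FV Vx] := LF x Lx; have [U [Uo VE]] := Fo V FV.
have [eps [eps0 sub]] : exists eps, 0 < eps /\ eball x eps `&` Xn `<=` U.
  by apply: tauA_open_at_A Uo _ => //; move: Vx; rewrite VE => -[].
have [p [px pe]] := qball_between x eps0.
apply: (nsub p) px; exists V => // y [/pe ye Ly].
by rewrite VE; split=> //; apply: sub; split=> //; right.
Qed.

End HalfSpace.

Theorem mainTheorem11 (R : realType) (n : nat) (hn : (2 <= n)%N) (A : set (pt R n))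
  (hA : A `<=` Ln (R:=R) (n:=n)) :
  Ln_tauA_Lindelof A <->
  ~ (exists C : set (pt R n),
       [/\ C `<=` Ln (R:=R) (n:=n) `\` A, Ln_euclid_closed C & ~ countable C]).
Proof.
split=> [L [C [CLA Ccl []]]|noC F Fo LF].
  have CnA : C `<=` ~` A by move=> x /CLA[].
  apply: (@lindelof_closed_discrete_countable _ (tauA_Ln_open A) (@Ln R n)) => //.
  - by move=> x /CLA[].
  - exact: tauA_Ln_open_setD.
  - by move=> c /CLA[Lc nAc]; exact: tauA_Ln_open_set1.
apply: (countable_subcover_of_residual (b := @qball R n) LF).
apply: contrapT => nc; apply: noC; exists (residual (@qball R n) (@Ln R n) F).
split=> //.
- exact: residual_qball_sub.
- exact: residual_qball_closed.
Qed.
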